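(* Let $Q$ be a finite (right or left) Bol loop of odd order and let $H$ be a normal subloop of $Q$ of order $3$. Then $H\le Z(Q)$.
   Context: A loop is a set with a binary multiplication and a two-sided identity $1$ in which all left and right translations are bijections. A loop is right Bol if it satisfies $((xy)z)y=x((yz)y)$, left Bol if it satisfies $y(z(yx))=(y(zy))x$. A subloop is normal if it is invariant under the inner mapping group (the stabilizer of $1$ in the group generated by all left and right translations). The nucleus $N(Q)$ is the set of $x\in Q$ with $x\cdot yz=xy\cdot z$, $y\cdot xz=yx\cdot z$, $y\cdot zx=yz\cdot x$ for all $y,z$; the center is $Z(Q)=\{x\in N(Q): xy=yx\text{ for all }y\in Q\}$. *)

From mathcomp Require Import all_boot all_fingroup.
Set Implicit Arguments. Unset Strict Implicit. Unset Printing Implicit Defensive.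

Definition is_loop (T : finType) (mul : T -> T -> T) (one : T) : Prop :=
  [/\ forall x, mul one x = x, forall x, mul x one = x,
      forall a, bijective (mul a) & forall a, bijective (fun x => mul x a)].

Definition right_bol (T : Type) (mul : T -> T -> T) : Prop :=
  forall x y z, mul (mul (mul x y) z) y = mul x (mul (mul y z) y).

Definition left_bol (T : Type) (mul : T -> T -> T) : Prop :=
  forall x y z, mul y (mul z (mul y x)) = mul (mul y (mul z y)) x.

Definition subloop (T : finType) (mul : T -> T -> T) (one : T) (H : {set T}) : Prop :=
  [/\ one \in H,
      forall a b, a \in H -> b \in H -> mul a b \in H,
      forall a b x, a \in H -> b \in H -> mul a x = b -> x \in H &
      forall a b x, a \in H -> b \in H -> mul x a = b -> x \in H].

Section Mlt.
Variables (T : finType) (mul : T -> T -> T) (one : T).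

(* left / right translations as permutations (identity if not injective,
   which never happens in a loop) *)
Definition Lperm (a : T) : {perm T} := insubd (1%g : {perm T}) [ffun x => mul a x].
Definition Rperm (a : T) : {perm T} := insubd (1%g : {perm T}) [ffun x => mul x a].

Definition Mlt : {set {perm T}} :=
  (<<[set Lperm a | a : T] :|: [set Rperm a | a : T]>>)%g.
Definition Inn : {set {perm T}} := [set p in Mlt | p one == one].

End Mlt.

Definition normal_subloop (T : finType) (mul : T -> T -> T) (one : T) (H : {set T}) : Prop :=
  subloop mul one H /\ forall p, p \in Inn mul one -> [set p x | x in H] = H.

Definition nucleus (T : finType) (mul : T -> T -> T) : {set T} :=
  [set x | [forall y, forall z,
     [&& mul x (mul y z) == mul (mul x y) z,
         mul y (mul x z) == mul (mul y x) z &
         mul y (mul z x) == mul (mul y z) x]]].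

Definition center (T : finType) (mul : T -> T -> T) : {set T} :=
  [set x in nucleus mul | [forall y, mul x y == mul y x]].

From mathcomp Require Import all_boot all_fingroup.
Set Implicit Arguments. Unset Strict Implicit. Unset Printing Implicit Defensive.

(* Passing to the opposite loop (same inner mapping group, same center) turns a
   left Bol loop into a right Bol one, so let Q be right Bol.  Being a subloop of
   order 3, H = {1, g, g^2} with g^3 = 1.  Normality gives, for all x and z,
   g z = z k and (x g) z = (x z) k' with k, k' in {g, g^2} (images of g under the
   inner mappings R_z L_z^-1 and L_x R_z L_(xz)^-1).  Feeding this into the Bol
   identity ((x g) z) g = x ((g z) g) leaves two cases: either g z = z g and
   R_g R_z = R_z R_g, or R_z conjugates R_g to R_g^-1 = R_(g^2).  Powers of R_z are
   right translations, so <R_z> acts semiregularly and has odd order; hence the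
   second case would force R_g^2 = 1.  In the first case Bol again shows that g is
   right nuclear, and g lies in the center. *)


Section GroupFacts.
Local Open Scope group_scope.

Lemma conjg_inv_odd (gT : finGroupType) (a b : gT) :
  a ^ b = a^-1 -> odd #[b] -> a ^+ 2 = 1.
Proof.
move=> abV odd_b.
have conj_exp n : a ^ (b ^+ n) = if odd n then a^-1 else a.
  elim: n => [|n IHn]; first by rewrite conjg1.
  by rewrite expgSr conjgM IHn /=; case: (odd n); rewrite ?conjVg abV ?invgK.
have aV : a = a^-1 by rewrite -{1}(conjg1 a) -(expg_order b) conj_exp odd_b.
by rewrite expgS expg1 {1}aV mulVg.
Qed.

Lemma semiregular_dvdn_card (T : finType) (G : {group {perm T}}) :
  (forall x, 'C_G[x | 'P] = 1) -> #|G| %| #|T|.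
Proof.
move=> regG.
have actsG : [acts G, on [set: T] | 'P] by apply/actsP => a _ x; rewrite !inE.
rewrite -cardsT (@card_uniform_partition _ #|G| _ _ ^~ (orbit_partition actsG)) ?dvdn_mull //.
by move=> _ /imsetP[x _ ->]; rewrite card_orbit regG indexg1.
Qed.

End GroupFacts.

Lemma set3P (T : finType) (x a b c : T) :
  reflect [\/ x = a, x = b | x = c] (x \in [set a; b; c]).
Proof.
rewrite !inE; apply: (iffP idP) => [|[] ->]; rewrite ?eqxx ?orbT //.
by case/orP => [/orP[]|] /eqP ->; [apply: Or31 | apply: Or32 | apply: Or33].
Qed.

Lemma card3_setE (T : finType) (A : {set T}) a b c :
    #|A| = 3 -> a \in A -> b \in A -> c \in A -> a != b -> a != c -> b != c ->
  A = [set a; b; c].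
Proof.
move=> cardA aA bA cA ab ac bc; apply/esym/eqP; rewrite eqEcard cardA.
apply/andP; split; first by apply/subsetP => x /set3P[] ->.
by rewrite -setUA !cardsU1 cards1 !inE (negbTE ab) (negbTE ac) (negbTE bc).
Qed.

Lemma insubd_perm_ffunE (T : finType) (f : T -> T) : injective f ->
  insubd (1%g : {perm T}) [ffun x => f x] =1 f.
Proof.
move=> injf x; have injf' : injectiveb [ffun x => f x].
  by apply/injectiveP => a b; rewrite !ffunE => /injf.
by rewrite fun_of_perm.unlock /= insubdK // ffunE.
Qed.

Definition opp_mul (T : Type) (mul : T -> T -> T) : T -> T -> T := fun x y => mul y x.

Section Opposite.
Variables (T : finType) (mul : T -> T -> T) (one : T).

Lemma opp_loop : is_loop mul one -> is_loop (opp_mul mul) one.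
Proof. by case. Qed.

Lemma left_bol_opp : left_bol mul -> right_bol (opp_mul mul).
Proof. by move=> bolT x y z; apply: bolT. Qed.

Lemma Inn_opp : Inn (opp_mul mul) one = Inn mul one.
Proof. by rewrite /Inn /Mlt setUC. Qed.

Lemma normal_subloop_opp H :
  normal_subloop mul one H -> normal_subloop (opp_mul mul) one H.
Proof.
case=> -[oneH mulH divlH divrH] innH; split; last by rewrite Inn_opp.
by split=> // a b *; apply: mulH.
Qed.

Lemma sub_nucleus_opp : nucleus mul \subset nucleus (opp_mul mul).
Proof.
apply/subsetP => x; rewrite !inE => /forallP nx.
apply/forallP => y; apply/forallP => z; have /forallP/(_ y)/and3P[n1 n2 n3] := nx z.
by rewrite /opp_mul (eqP n1) (eqP n2) (eqP n3) !eqxx.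
Qed.

End Opposite.

Lemma center_opp (T : finType) (mul : T -> T -> T) : center (opp_mul mul) = center mul.
Proof.
have nucl : nucleus (opp_mul mul) = nucleus mul.
  by apply/eqP; rewrite eqEsubset sub_nucleus_opp (sub_nucleus_opp (opp_mul mul)).
apply/setP => x; rewrite [LHS]inE [RHS]inE nucl; congr (_ && _).
by apply/forallP/forallP => xC y; rewrite eq_sym; apply: xC.
Qed.

Section Loop.
Variables (T : finType) (mul : T -> T -> T) (one : T).
Hypothesis loopT : is_loop mul one.

Lemma mul1x x : mul one x = x. Proof. by case: loopT. Qed.
Lemma mulx1 x : mul x one = x. Proof. by case: loopT. Qed.
Lemma mulI a : injective (mul a). Proof. by case: loopT => _ _ /(_ a) /bij_inj. Qed.
Lemma mulIr a : injective (mul^~ a). Proof. by case: loopT => _ _ _ /(_ a) /bij_inj. Qed.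

Lemma LpermE a x : Lperm mul a x = mul a x.
Proof. by rewrite /Lperm insubd_perm_ffunE //; apply: mulI. Qed.

Lemma RpermE a x : Rperm mul a x = mul x a.
Proof. by rewrite /Rperm insubd_perm_ffunE //; apply: mulIr. Qed.

Lemma Rperm1 : Rperm mul one = 1%g.
Proof. by apply/permP => x; rewrite RpermE mulx1 perm1. Qed.

Lemma Lperm_Mlt a : Lperm mul a \in Mlt mul.
Proof. by rewrite mem_gen // inE imset_f. Qed.

Lemma Rperm_Mlt a : Rperm mul a \in Mlt mul.
Proof. by rewrite mem_gen // inE imset_f ?orbT. Qed.

Lemma mem_center g :
    (forall y, mul g y = mul y g) ->
    (forall x y, mul (mul x g) y = mul (mul x y) g) ->
    (forall x y, mul x (mul y g) = mul (mul x y) g) ->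
  g \in center mul.
Proof.
move=> gC gM gR; rewrite !inE; apply/andP; split; last by apply/forallP => y; rewrite gC.
apply/forallP => y; apply/forallP => z; apply/and3P; split; apply/eqP.
- by rewrite gC (gC y) gM.
- by rewrite gC gR gM.
- exact: gR.
Qed.

Lemma normal_subloop_Mlt H p q h :
    normal_subloop mul one H -> p \in Mlt mul -> q \in Mlt mul -> p one = q one ->
  h \in H -> exists2 k, k \in H & p h = q k.
Proof.
case=> _ innH Mp Mq pq hH; pose r := (p * q^-1)%g.
have innr : r \in Inn mul one by rewrite inE groupM ?groupV //= permM pq permK.
exists (r h); last by rewrite permM permKV.
by rewrite -(innH r innr) imset_f.
Qed.

Section Order3.
Variables (H : {set T}) (g : T).
Hypotheses (subH : subloop mul one H) (cardH : #|H| = 3) (gH : g \in H) (g1 : g != one).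

Let oneH : one \in H. Proof. by case: subH. Qed.
Let mulH a b : a \in H -> b \in H -> mul a b \in H.
Proof. by case: subH => _ closedH _ _; apply: closedH. Qed.
Let one_neq_g : one != g. Proof. by rewrite eq_sym. Qed.

Lemma sqr_neq_g : mul g g != g.
Proof. by apply/eqP => ggE; case/eqP: g1; apply: (mulIr (a := g)); rewrite ggE mul1x. Qed.

Lemma sqr_neq1 : mul g g != one.
Proof.
apply/eqP => gg1; have [c cH] : exists2 c, c \in H & c \notin [set one; g].
  apply/subsetPn; apply: contraTN isT => /subset_leq_card.
  by rewrite cardH cards2; case: (one != g).
rewrite !inE negb_or => /andP[c1 cg].
have := mulH gH cH; rewrite (card3_setE cardH oneH gH cH one_neq_g) 1?eq_sym //.
case/set3P => gc.
- by case/eqP: cg; apply: (mulI (a := g)); rewrite gc gg1.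
- by case/eqP: c1; apply: (mulI (a := g)); rewrite gc mulx1.
- by case/eqP: g1; apply: (mulIr (a := c)); rewrite gc mul1x.
Qed.

Lemma subloop3E : H = [set one; g; mul g g].
Proof.
by rewrite (card3_setE cardH oneH gH (mulH gH gH) one_neq_g) 1?eq_sym ?sqr_neq1 ?sqr_neq_g.
Qed.

Lemma cube_eq1 : mul (mul g g) g = one.
Proof.
have := mulH (mulH gH gH) gH; rewrite subloop3E; case/set3P => // ggg.
- by case/eqP: sqr_neq1; apply: (mulIr (a := g)); rewrite ggg mul1x.
- by case/eqP: g1; apply: (mulI (a := mul g g)); rewrite ggg mulx1.
Qed.

End Order3.

Section RightBol.
Hypothesis bolT : right_bol mul.

Lemma right_alt x y : mul (mul x y) y = mul x (mul y y).
Proof. by have := bolT x y one; rewrite !mulx1. Qed.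

Lemma Rperm_expE z n : exists c, (Rperm mul z ^+ n)%g = Rperm mul c.
Proof.
set R := Rperm mul z.
have RzRz c : (R * Rperm mul c * R)%g = Rperm mul (mul (mul z c) z).
  by apply/permP => x; rewrite !permM !RpermE bolT.
have two_step m :
    (exists c, (R ^+ m)%g = Rperm mul c) /\ (exists c, (R ^+ m.+1)%g = Rperm mul c).
  elim: m => [|m [[c Rc] [d Rd]]].
    by split; [exists one; rewrite expg0 Rperm1 | exists z; rewrite expg1].
  by split; [exists d | exists (mul (mul z c) z); rewrite -RzRz -Rc -expgS -expgSr].
by case: (two_step n).
Qed.

Lemma odd_order_Rperm z : odd #|T| -> odd #[Rperm mul z]%g.
Proof.
move=> oddT; apply: dvdn_odd oddT; apply: semiregular_dvdn_card => x.
apply/trivgP/subsetP => q; rewrite !inE => /andP[/cycleP[n ->]].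
have [c ->] := Rperm_expE z n.
rewrite sub1set inE /= apermE RpermE -{2}[x]mulx1 => /eqP/mulI ->.
by rewrite Rperm1.
Qed.

Section Normal3.
Variables (H : {set T}) (g : T).
Hypotheses (normH : normal_subloop mul one H) (cardH : #|H| = 3).
Hypotheses (gH : g \in H) (g1 : g != one).

Let subH : subloop mul one H. Proof. by case: normH. Qed.
Let cubeg : mul (mul g g) g = one. Proof. exact: cube_eq1 subH cardH gH g1. Qed.
Let gg1 : mul g g != one. Proof. exact: sqr_neq1 subH cardH gH g1. Qed.

Lemma mul_sqrK w : mul (mul w g) (mul g g) = w.
Proof. by rewrite -right_alt bolT cubeg mulx1. Qed.

Lemma mul_sqrKV w : mul (mul w (mul g g)) g = w.
Proof. by rewrite -right_alt bolT cubeg mulx1. Qed.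

Lemma Rperm_sqr : Rperm mul (mul g g) = (Rperm mul g)^-1%g.
Proof.
apply/esym/eqP; rewrite eq_invg_mul; apply/eqP/permP => x.
by rewrite permM !RpermE mul_sqrK perm1.
Qed.

Lemma mem_subloop3_neq1 k : k \in H -> k != one -> k \in [set g; mul g g].
Proof.
by rewrite (subloop3E subH cardH gH g1) => /set3P[] ->; rewrite ?eqxx // !inE eqxx ?orbT.
Qed.

Lemma commute_g_upto z : exists2 k, k \in [set g; mul g g] & mul g z = mul z k.
Proof.
have [|k kH gzE] := normal_subloop_Mlt normH (Rperm_Mlt z) (Lperm_Mlt z) _ gH.
  by rewrite RpermE LpermE mul1x mulx1.
rewrite RpermE LpermE in gzE; exists k => //.
apply: mem_subloop3_neq1 => //; apply: contra_neq g1 => k1.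
by apply: (mulIr (a := z)); rewrite gzE k1 mulx1 mul1x.
Qed.

Lemma swap_g_upto x z :
  exists2 k, k \in [set g; mul g g] & mul (mul x g) z = mul (mul x z) k.
Proof.
have [|k kH xgzE] :=
  normal_subloop_Mlt normH (groupM (Lperm_Mlt x) (Rperm_Mlt z)) (Lperm_Mlt (mul x z)) _ gH.
  by rewrite permM !RpermE !LpermE !mulx1.
rewrite permM RpermE !LpermE in xgzE; exists k => //.
apply: mem_subloop3_neq1 => //; apply: contra_neq g1 => k1.
by apply: (mulI (a := x)); apply: (mulIr (a := z)); rewrite xgzE k1 !mulx1.
Qed.

Lemma swap_g_of_commute z : mul g z = mul z g -> forall x, mul (mul x g) z = mul (mul x z) g.
Proof.
move=> gzC x; have [k /set2P[] -> // xgzE] := swap_g_upto x z.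
have := bolT x g z; rewrite xgzE gzC right_alt mul_sqrKV => /mulI.
by rewrite -{1}[z]mulx1 => /mulI/esym/eqP; rewrite (negbTE gg1).
Qed.

Lemma swap_sqr_of_commute_sqr z : mul g z = mul z (mul g g) ->
  forall x, mul (mul x g) z = mul (mul x z) (mul g g).
Proof.
move=> gzC x; have [k /set2P[] -> // xgzE] := swap_g_upto x z.
have := bolT x g z; rewrite xgzE gzC right_alt mul_sqrKV -[in RHS](mulx1 (mul x z)).
by move/mulI/eqP; rewrite (negbTE gg1).
Qed.

Hypothesis oddT : odd #|T|.

Lemma no_swap_sqr z : ~ (forall x, mul (mul x g) z = mul (mul x z) (mul g g)).
Proof.
move=> swap_sqr; have conj_inv : (Rperm mul g ^ Rperm mul z = (Rperm mul g)^-1)%g.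
  have RgRz : (Rperm mul g * Rperm mul z = Rperm mul z * (Rperm mul g)^-1)%g.
    by apply/permP => x; rewrite !permM -Rperm_sqr !RpermE swap_sqr.
  by rewrite conjgE RgRz mulKg.
have /permP/(_ one) := conjg_inv_odd conj_inv (odd_order_Rperm z oddT).
by rewrite expgS expg1 permM !RpermE mul1x perm1; apply/eqP.
Qed.

Lemma commute_g z : mul g z = mul z g.
Proof.
have [k /set2P[] -> // gzE] := commute_g_upto z.
by case: (no_swap_sqr (swap_sqr_of_commute_sqr gzE)).
Qed.

Lemma swap_g x z : mul (mul x g) z = mul (mul x z) g.
Proof. exact: swap_g_of_commute (commute_g z) x. Qed.

Lemma sqr_sqr : mul (mul g g) (mul g g) = g.
Proof. by rewrite -right_alt cubeg mul1x. Qed.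

Lemma right_nuclear_sqr x z : mul x (mul z (mul g g)) = mul (mul x z) (mul g g).
Proof. by have := bolT x g z; rewrite commute_g swap_g !right_alt. Qed.

Lemma right_nuclear_g x z : mul x (mul z g) = mul (mul x z) g.
Proof.
have zgE : mul z g = mul (mul z (mul g g)) (mul g g) by rewrite right_alt sqr_sqr.
by rewrite zgE !right_nuclear_sqr right_alt sqr_sqr.
Qed.

Lemma normal3_mem_center : g \in center mul.
Proof. by apply: mem_center; [apply: commute_g | apply: swap_g | apply: right_nuclear_g]. Qed.

End Normal3.

Lemma right_bol_normal3_sub_center H :
  odd #|T| -> normal_subloop mul one H -> #|H| = 3 -> H \subset center mul.
Proof.
move=> oddT normH cardH; apply/subsetP => g gH; have [-> | g1] := eqVneq g one.
  by apply: mem_center => *; rewrite ?mul1x ?mulx1.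
exact: normal3_mem_center normH cardH gH g1 oddT.
Qed.

End RightBol.
End Loop.

Theorem theorem4p12 (T : finType) (mul : T -> T -> T) (one : T) (H : {set T}) :
  is_loop mul one ->
  (right_bol mul \/ left_bol mul) ->
  odd #|T| ->
  normal_subloop mul one H ->
  #|H| = 3 ->
  H \subset center mul.
Proof.
move=> loopT [bolT | /left_bol_opp bolT] oddT normH cardH.
  exact: (right_bol_normal3_sub_center loopT bolT oddT normH cardH).
rewrite -center_opp; apply: (right_bol_normal3_sub_center (opp_loop loopT) bolT) => //.
exact: normal_subloop_opp.
Qed.
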